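(* Let $n\ge1$. There exists an involution $\phi$ of $B_n$ such that for every $\sigma\in B_n$, \[ \mathrm{maj}_B(\sigma)=\mathrm{rmaj}_{B_n}(\phi(\sigma))\quad\text{and}\quad \mathrm{Neg}(\sigma^{-1})=\mathrm{Neg}(\phi(\sigma)^{-1}). \]
   Context: $[a]=\{1,\dots,a\}$. $B_n$ is the group of bijections $\sigma$ of $\{\pm1,\dots,\pm n\}$ with $\sigma(-i)=-\sigma(i)$, written in window notation $[\sigma(1),\dots,\sigma(n)]$, with product $(\sigma\tau)(i)=\sigma(\tau(i))$. The Coxeter generators are $s_0=[-1,2,\dots,n]$ and $s_i=$ the transposition of $i$ and $i+1$ ($1\le i\le n-1$); $\ell_B$ is the length with respect to them. $\mathrm{Neg}(\sigma)=\{i\in[n]:\sigma(i)<0\}$. $\mathrm{Des}_S(\sigma)=\{1\le i\le n-1:\ell_B(\sigma s_i)<\ell_B(\sigma)\}$, $\mathrm{maj}_B(\sigma)=\sum_{i\in\mathrm{Des}_S(\sigma)}i$, and $\mathrm{rmaj}_{B_n}(\sigma)=\sum_{i\in\mathrm{Des}_S(\sigma)}(n-i)$. *)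

From mathcomp Require Import all_boot all_fingroup.
Set Implicit Arguments. Unset Strict Implicit. Unset Printing Implicit Defensive.

(* Signed letters: (i, b) : 'I_n * bool encodes +(i+1) if b = false,
   and -(i+1) if b = true. *)
Definition signed (n : nat) := ('I_n * bool)%type.

Definition negs n (x : signed n) : signed n := (x.1, ~~ x.2).

Definition inB n (s : {perm signed n}) : bool :=
  [forall x : signed n, s (negs x) == negs (s x)].

(* Paper's product (s t)(i) = s (t i) is written comp s t; mathcomp's
   (t * s)%g acts as x |-> s (t x). *)
Definition comp n (s t : {perm signed n}) : {perm signed n} := (t * s)%g.

Lemma pred_lt n (i : 'I_n) : i.-1 < n.
Proof. exact: leq_ltn_trans (leq_pred i) (ltn_ord i). Qed.

(* Coxeter generators: gen i with val i = 0 is s_0 = [-1,2,...,n];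
   for 1 <= val i <= n-1, gen i = s_i swaps letters i and i+1 (1-based),
   i.e. 0-based indices i-1 and i, and likewise -i and -(i+1). *)
Definition gen n (i : 'I_n) : {perm signed n} :=
  if val i == 0 then tperm (i, false) (i, true)
  else (tperm (Ordinal (pred_lt i), false) (i, false) *
        tperm (Ordinal (pred_lt i), true) (i, true))%g.

Definition word_prod n (w : seq 'I_n) : {perm signed n} :=
  foldr (fun j acc => comp (gen j) acc) 1%g w.

(* Coxeter length: least k such that s is a product of k generators.
   Every element of B_n has word length < #|B_n| <= #|{perm signed n}|,
   so the bounded minimum below is the genuine minimum. *)
Definition lenB n (s : {perm signed n}) : nat :=
  \big[minn/#|{perm signed n}|]_(k < #|{perm signed n}|.+1 |
        [exists w : k.-tuple 'I_n, word_prod w == s]) k.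

Definition DesS n (s : {perm signed n}) : {set 'I_n} :=
  [set i : 'I_n | (0 < val i) && (lenB (comp s (gen i)) < lenB s)].

Definition majB n (s : {perm signed n}) : nat := \sum_(i in DesS s) val i.
Definition rmajB n (s : {perm signed n}) : nat := \sum_(i in DesS s) (n - val i).

Definition NegB n (s : {perm signed n}) : {set 'I_n} :=
  [set i : 'I_n | (s (i, false)).2].

(* Order the signed letters as -n < ... < -1 < 1 < ... < n. For σ in B_n, the
   number of inversions of σ as a permutation of this chain plus #Neg(σ) equals
   2 ℓ_B(σ): right multiplication by s_i changes it by ±2 according as
   σ(i) > σ(i+1) or not (with σ(0) = 0), and some s_i decreases it unless σ = 1.
   Hence Des_S(σ) = {1 <= i < n | σ(i) > σ(i+1)}. Let φ(σ)(i) be the element of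
   {σ(1), ..., σ(n)} whose rank in that set is complementary to the rank of
   σ(n+1-i), and φ(σ)(-i) = -φ(σ)(i). Then φ is an involution of B_n preserving
   the value set {σ(1), ..., σ(n)}, hence Neg(σ^-1), and σ has a descent at i iff
   φ(σ) has one at n - i, which turns maj_B(σ) into rmaj_B(φ(σ)). *)

From Pilot Require Import Defs.
From mathcomp Require Import all_boot all_fingroup all_algebra zify.
Import GRing.Theory.
Set Implicit Arguments. Unset Strict Implicit. Unset Printing Implicit Defensive.

Lemma incr_squeeze (f : nat -> nat) a N :
  (forall j, j.+1 < N -> f j < f j.+1) -> a <= f 0 -> f N.-1 < a + N ->
  forall m, m < N -> f m = a + m.
Proof.
move=> incr f0 fN m ltmN.
have gap k j : j + k < N -> f j + k <= f (j + k).
  elim: k => [|k IH] ltjkN; first by rewrite !addn0.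
  rewrite addnS in ltjkN *; have := incr _ ltjkN; have := IH (ltnW ltjkN); lia.
by have := gap m 0; have := gap (N.-1 - m) m; rewrite add0n subnKC; lia.
Qed.

Lemma geq_bigmin (I : eqType) (r : seq I) (P : pred I) (F : I -> nat) M i :
  i \in r -> P i -> \big[minn/M]_(k <- r | P k) F k <= F i.
Proof.
elim: r => [|j r IH] //; rewrite inE big_cons => /predU1P [<- ->|ri Pi].
  exact: geq_minl.
by case: ifP => _; rewrite ?geq_min IH ?orbT.
Qed.

Lemma bigmin_ord_eq M m (P : pred 'I_M.+1) : m <= M -> P (inord m) ->
  (forall k : 'I_M.+1, P k -> m <= k) -> \big[minn/M]_(k < M.+1 | P k) k = m.
Proof.
move=> leMm Pm minm; apply/eqP; rewrite eqn_leq; apply/andP; split.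
  by have := geq_bigmin (@nat_of_ord M.+1) M (mem_index_enum _) Pm; rewrite inordK.
by elim/big_ind: _ => // x y mx my; rewrite leq_min mx my.
Qed.

Section KeyOrder.

Variables (T : finType) (key : T -> nat).
Hypothesis key_inj : injective key.
Implicit Types (V : {set T}) (u v : T).

Lemma ltn_keyN u v : u != v -> (key v < key u) = ~~ (key u < key v).
Proof.
by move=> neq_uv; rewrite ltnNge leq_eqVlt negb_or (inj_eq key_inj) (negbTE neq_uv).
Qed.

Definition inversions (p : {perm T}) : {set T * T} :=
  [set uv | (key uv.1 < key uv.2) && (key (p uv.2) < key (p uv.1))].

Lemma ltn_key_tperm x y u v : key y = (key x).+1 ->
  (u, v) != (x, y) -> (u, v) != (y, x) ->
  (key (tperm x y u) < key (tperm x y v)) = (key u < key v).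
Proof.
have keyN a b : a <> b -> key a != key b by move/eqP/(contra_neq (@key_inj _ _)).
move=> kxy; case: tpermP => [->|->|/keyN ux /keyN uy];
  case: tpermP => [->|->|/keyN vx /keyN vy]; rewrite ?eqxx ?ltnn // => _ _; lia.
Qed.

Lemma card_inversions_tperm p x y : key y = (key x).+1 ->
  #|inversions (tperm x y * p)| + (key (p y) < key (p x))
  = #|inversions p| + (key (p x) < key (p y)).
Proof.
move=> kxy; set t := tperm x y.
pose f uv := (t uv.1, t uv.2).
have fK : involutive f by move=> [u v]; rewrite /f /= !tpermK.
rewrite (cardsD1 (x, y) (inversions (t * p))) (cardsD1 (x, y) (inversions p)).
have -> : inversions (t * p) :\ (x, y) = f @^-1: (inversions p :\ (x, y)).
  apply/setP => -[u v]; rewrite !inE /f /= !permM.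
  have [[-> ->]|uv_xy] := eqVneq (u, v) (x, y).
    by rewrite /t tpermL tpermR kxy [_ < key x]ltnNge leqnSn andbF.
  have [[-> ->]|uv_yx] := eqVneq (u, v) (y, x).
    by rewrite /t tpermL tpermR eqxx kxy [_ < key x]ltnNge leqnSn.
  have -> : (t u, t v) != (x, y).
    apply: contraNneq uv_yx => -[tu tv].
    by rewrite -(tpermK x y u) -(tpermK x y v) -/t tu tv /t tpermL tpermR.
  by rewrite ltn_key_tperm.
rewrite card_preimset; last exact: inv_inj.
rewrite !inE /= !permM /t tpermL tpermR kxy ltnSn /=.
by rewrite addnAC [RHS]addnAC (addnC (key (p y) < key (p x))).
Qed.

Definition rk (V : {set T}) v := #|[set u in V | key u < key v]|.

Definition rflip (V : {set T}) v :=
  odflt v [pick u in V | rk V u == #|V|.-1 - rk V v].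

Lemma rk_lt V v : v \in V -> rk V v < #|V|.
Proof.
move=> Vv; apply: proper_card; apply/properP; split.
  by apply/subsetP => u; rewrite inE => /andP [].
by exists v; rewrite // inE ltnn andbF.
Qed.

Lemma rk_ltn V u v : u \in V -> key u < key v -> rk V u < rk V v.
Proof.
move=> Vu kuv; apply: proper_card; apply/properP; split.
  by apply/subsetP => w; rewrite !inE => /andP [-> /ltn_trans ->].
by exists u; rewrite !inE ?Vu ?kuv // ltnn andbF.
Qed.

Lemma ltn_rk V u v : u \in V -> v \in V -> (rk V u < rk V v) = (key u < key v).
Proof.
move=> Vu Vv; case: (ltngtP (key u) (key v)) => [kuv|kvu|/key_inj ->].
- by rewrite rk_ltn.
- by apply/negbTE; rewrite -leqNgt ltnW // rk_ltn.
- by rewrite ltnn.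
Qed.

Lemma rk_inj V : {in V &, injective (rk V)}.
Proof.
move=> u v Vu Vv e; case: (ltngtP (key u) (key v)) => [kuv|kvu|/key_inj //].
- by have := rk_ltn Vu kuv; rewrite e ltnn.
- by have := rk_ltn Vv kvu; rewrite e ltnn.
Qed.

Lemma rk_onto V r : r < #|V| -> exists2 u, u \in V & rk V u = r.
Proof.
move=> ltrV; set ranks := [seq rk V u | u <- enum V].
have uniq_ranks : uniq ranks.
  by rewrite map_inj_in_uniq ?enum_uniq // => u v; rewrite !mem_enum; apply: rk_inj.
have sub_ranks : {subset ranks <= iota 0 #|V|}.
  by move=> k /mapP [u]; rewrite mem_enum mem_iota => /rk_lt ltuV ->.
have size_ranks : size (iota 0 #|V|) <= size ranks by rewrite size_iota size_map -cardE.
have [_ /(_ r)] := uniq_min_size uniq_ranks sub_ranks size_ranks.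
by rewrite mem_iota ltrV => /mapP [u]; rewrite mem_enum => Vu ->; exists u.
Qed.

Lemma rflipP V v : v \in V -> rflip V v \in V /\ rk V (rflip V v) = #|V|.-1 - rk V v.
Proof.
move=> Vv; rewrite /rflip; case: pickP => [u /andP [Vu /eqP]| none] //=.
have [|u Vu rku] := @rk_onto V (#|V|.-1 - rk V v).
  by have := rk_lt Vv; lia.
by have := none u; rewrite Vu rku eqxx.
Qed.

Lemma rflip_in V v : v \in V -> rflip V v \in V.
Proof. by case/rflipP. Qed.

Lemma rflipK V : {in V, involutive (rflip V)}.
Proof.
move=> v Vv; have [fVv rkf] := rflipP Vv; have [ffVv rkff] := rflipP fVv.
by apply: (rk_inj ffVv Vv); rewrite rkff rkf; have := rk_lt Vv; lia.
Qed.

Lemma ltn_rflip V u v : u \in V -> v \in V ->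
  (key (rflip V u) < key (rflip V v)) = (key v < key u).
Proof.
move=> Vu Vv; have [fVu rku] := rflipP Vu; have [fVv rkv] := rflipP Vv.
rewrite -(ltn_rk fVu fVv) -(ltn_rk Vv Vu) rku rkv.
by have := rk_lt Vu; have := rk_lt Vv; lia.
Qed.

End KeyOrder.

Section SignedLetters.

Variable n : nat.
Implicit Types (x y : signed n) (s t : {perm signed n}) (i : 'I_n).

(* [skey] numbers the letters -n < ... < -1 < 1 < ... < n as 0, ..., 2n-1. *)
Definition skey x : nat := if x.2 then n.-1 - x.1 else n + x.1.

Lemma skey_inj : injective skey.
Proof.
move=> [i b] [j c]; rewrite /skey /=; have := ltn_ord i; have := ltn_ord j.
by case: b c => [] [] /= ? ? e; first [lia | congr pair; apply: val_inj => /=; lia].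
Qed.

Lemma skey_lt x : skey x < n + n.
Proof. by case: x => [i []]; rewrite /skey /=; have := ltn_ord i; lia. Qed.

Lemma skey_negs x : skey (negs x) = (n + n).-1 - skey x.
Proof. by case: x => [i []]; rewrite /skey /=; have := ltn_ord i; lia. Qed.

Lemma ltn_skey_negs x : (skey x < skey (negs x)) = x.2.
Proof. by case: x => [i []]; rewrite /skey /=; have := ltn_ord i; lia. Qed.

Lemma leq_n_skey x : (n <= skey x) = ~~ x.2.
Proof. by case: x => [i []]; rewrite /skey /=; have := ltn_ord i; lia. Qed.

Lemma ltn_negs_skey x : (skey (negs x) < skey x) = ~~ x.2.
Proof. by case: x => [i []]; rewrite /skey /=; have := ltn_ord i; lia. Qed.

Lemma ltn_skey_negs2 x y : (skey (negs x) < skey (negs y)) = (skey y < skey x).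
Proof. by rewrite !skey_negs ltn_sub2lE //; have := skey_lt x; lia. Qed.

Lemma negsK : involutive (@negs n).
Proof. by case=> i b; rewrite /negs negbK. Qed.

Lemma negs_inj : injective (@negs n).
Proof. exact: inv_inj negsK. Qed.

Lemma inBP s : reflect (forall x, s (negs x) = negs (s x)) (inB s).
Proof. by apply: (iffP forallP) => sN x; apply/eqP. Qed.

Lemma inB1 : inB (1 : {perm signed n}).
Proof. by apply/inBP => x; rewrite !perm1. Qed.

Lemma inB_comp s t : inB s -> inB t -> inB (Defs.comp s t).
Proof. by move=> /inBP sN /inBP tN; apply/inBP => x; rewrite !permM tN sN. Qed.

Lemma tperm_sign x y z : x.2 = y.2 -> (tperm x y z).2 = z.2.
Proof. by move=> xy; case: tpermP => [->|->|] //; rewrite xy. Qed.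

Lemma tpermD_sign x y z : x.2 = y.2 -> z.2 != x.2 -> tperm x y z = z.
Proof.
by move=> xy zx; apply: tpermD; apply: contraNneq zx => <-; rewrite ?xy eqxx.
Qed.

Definition prev i : signed n :=
  if val i == 0 then (i, true) else (Ordinal (pred_lt i), false).

Lemma skey_prev i : skey (i, false) = (skey (prev i)).+1.
Proof.
rewrite /prev /skey /=; have := ltn_ord i.
by case: eqP => /= [-> | ?]; lia.
Qed.

Lemma prev0 i : val i = 0 -> prev i = (i, true).
Proof. by rewrite /prev => ->. Qed.

Lemma gen0 i : val i = 0 -> gen i = tperm (prev i) (i, false).
Proof. by move=> i0; rewrite /gen prev0 i0 // tpermC. Qed.

Lemma gen_pos i : 0 < i ->
  gen i = (tperm (prev i) (i, false) * tperm (negs (prev i)) (negs (i, false)))%g.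
Proof. by rewrite /gen /prev lt0n => /negPf ->. Qed.

Lemma prev_pos i : 0 < i -> prev i = (Ordinal (pred_lt i), false).
Proof. by rewrite /prev lt0n => /negPf ->. Qed.

Lemma prev_sign i : 0 < i -> (prev i).2 = false.
Proof. by move/prev_pos ->. Qed.

Lemma genE i x : 0 < i -> gen i x =
  if x.2 then tperm (negs (prev i)) (negs (i, false)) x else tperm (prev i) (i, false) x.
Proof.
move=> i_gt0; have pi := prev_sign i_gt0; rewrite gen_pos // permM.
case: ifP => xneg; first by rewrite [tperm (prev i) _ x]tpermD_sign ?pi ?xneg.
rewrite [tperm (negs _) _ _]tpermD_sign //= pi //.
by rewrite tperm_sign ?pi ?xneg.
Qed.

Lemma inB_gen i : inB (gen i).
Proof.
apply/inBP => x; case: (posnP i) => [i0|i_gt0].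
  by rewrite gen0 // (inj_tperm _ _ _ negs_inj) prev0 //= tpermC.
by rewrite !genE //=; case: x.2; rewrite /= (inj_tperm _ _ _ negs_inj) ?negsK.
Qed.

Lemma gen2 i : (gen i * gen i = 1)%g.
Proof.
apply/permP => x; rewrite permM perm1; case: (posnP i) => [i0|i_gt0].
  by rewrite gen0 // tpermK.
have pi := prev_sign i_gt0.
by rewrite [gen i x]genE //; case: ifP => xneg;
  rewrite genE // tperm_sign ?xneg ?tpermK //= pi.
Qed.

(* [descent s i] says σ(i) > σ(i+1) in the paper's 1-based notation, with the
   convention σ(0) = 0. *)
Definition descent s i := skey (s (i, false)) < skey (s (prev i)).

(* Twice the Coxeter length, by [lenB_dlen]. *)
Definition dlen s := #|inversions skey s| + #|NegB s|.

Lemma card_inversions_comp_gen0 s i : val i = 0 -> inB s ->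
  #|inversions skey (Defs.comp s (gen i))| + descent s i
  = #|inversions skey s| + ~~ descent s i.
Proof.
move=> i0 /inBP sN; rewrite /Defs.comp gen0 // /descent.
have sx : s (prev i) = negs (s (i, false)) by rewrite prev0 // -sN.
have := card_inversions_tperm skey_inj s (skey_prev i).
by rewrite sx ltn_skey_negs ltn_negs_skey.
Qed.

Lemma card_NegB_comp_gen0 s i : val i = 0 -> inB s ->
  #|NegB (Defs.comp s (gen i))| + descent s i = #|NegB s| + ~~ descent s i.
Proof.
move=> i0 /inBP sN; rewrite /Defs.comp gen0 // /descent.
have sx : s (prev i) = negs (s (i, false)) by rewrite prev0 // -sN.
rewrite sx ltn_skey_negs (cardsD1 i (NegB s)) (cardsD1 i (NegB _)).
have -> : NegB (tperm (prev i) (i, false) * s) :\ i = NegB s :\ i.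
  apply/setP => j; rewrite !inE permM; case: eqVneq => [//|ji] /=.
  by rewrite tpermD // ?prev0 // xpair_eqE ?andbF ?andbT // eq_sym ji.
rewrite !inE permM tpermR sx /=.
by case: (s (i, false)).2; rewrite /= add0n addn0 addnC.
Qed.

Lemma card_NegB_comp_gen_pos s i : 0 < i -> #|NegB (Defs.comp s (gen i))| = #|NegB s|.
Proof.
move=> i_gt0; have pos_inj : injective (fun j : 'I_n => (j, false) : signed n).
  by move=> j1 j2 [].
have tperm_pos j1 j2 j :
    tperm (j1, false) (j2, false) (j, false) = (tperm j1 j2 j, false) :> signed n.
  exact: esym (inj_tperm _ _ _ pos_inj).
have -> : NegB (Defs.comp s (gen i)) = tperm (Ordinal (pred_lt i)) i @^-1: NegB s.
  by apply/setP => j; rewrite !inE permM genE // prev_pos //= tperm_pos.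
exact/card_preimset/perm_inj.
Qed.

Lemma card_inversions_comp_gen_pos s i : 0 < i -> inB s ->
  #|inversions skey (Defs.comp s (gen i))| + 2 * descent s i
  = #|inversions skey s| + 2 * ~~ descent s i.
Proof.
(* [gen i] is a product of two adjacent transpositions of the chain, each
   changing the inversion count by 1 in the same direction. *)
move=> i_gt0 /inBP sN; rewrite /Defs.comp gen_pos // -mulgA /descent.
set a := prev i; set b : signed n := (i, false).
have pa : a.2 = false := prev_sign i_gt0.
have fix2 z : ~~ z.2 -> tperm (negs a) (negs b) z = z.
  by move=> zpos; rewrite tpermD_sign //= pa // (negbTE zpos).
have h1 := card_inversions_tperm skey_inj (tperm (negs a) (negs b) * s) (skey_prev i).
rewrite -/a -/b !permM !fix2 ?pa // in h1.
have kab : skey (negs a) = (skey (negs b)).+1.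
  by have := skey_lt b; rewrite !skey_negs /b skey_prev -/a; lia.
have h2 := card_inversions_tperm skey_inj s kab.
rewrite tpermC !sN !ltn_skey_negs2 in h2.
have sab : s a != s b.
  by rewrite (inj_eq perm_inj) /a prev_pos // xpair_eqE andbT -val_eqE /=; lia.
rewrite (ltn_keyN skey_inj sab) negbK in h1 h2 *.
by rewrite !mul2n -!addnn !addnA h1 addnAC h2.
Qed.

Lemma dlen_comp_gen s i : inB s ->
  dlen (Defs.comp s (gen i)) + 2 * descent s i = dlen s + 2 * ~~ descent s i.
Proof.
move=> sB; rewrite /dlen; case: (posnP i) => [i0|i_gt0].
  by have := card_inversions_comp_gen0 i0 sB; have := card_NegB_comp_gen0 i0 sB; lia.
by have := card_inversions_comp_gen_pos i_gt0 sB; rewrite card_NegB_comp_gen_pos //; lia.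
Qed.

Lemma dlen1 : dlen 1 = 0.
Proof.
rewrite /dlen; apply/eqP; rewrite addn_eq0 !cards_eq0; apply/andP; split; apply/eqP/setP.
  by move=> [u v]; rewrite !inE !perm1 /=; case: ltngtP.
by move=> j; rewrite !inE perm1.
Qed.

Lemma prev_neq i : prev i != (i, false).
Proof. by apply/eqP => e; have := skey_prev i; rewrite e; lia. Qed.

Lemma no_descent_eq1 s : inB s -> (forall i, ~~ descent s i) -> s = 1%g.
Proof.
move=> /inBP sN no_desc.
have asc i : skey (s (prev i)) < skey (s (i, false)).
  by rewrite (ltn_keyN skey_inj) ?no_desc // (inj_eq perm_inj) eq_sym prev_neq.
have [n0|n_gt0] := posnP n.
  by apply/permP => -[j b]; have := ltn_ord j; rewrite [X in _ < X]n0.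
pose f m := skey (s (insubd (Ordinal n_gt0) m, false)).
have fS j : j.+1 < n -> f j < f j.+1.
  move=> ltjn; have := asc (insubd (Ordinal n_gt0) j.+1).
  rewrite prev_pos; last by rewrite val_insubd ltjn.
  congr (skey (s (_, _)) < _); apply: val_inj; rewrite /= !val_insubd ltjn /=.
  by rewrite (ltnW ltjn).
have f0 : n <= f 0.
  have := asc (Ordinal n_gt0); rewrite prev0 // -[(_, true)]/(negs (_, false)) sN.
  rewrite ltn_negs_skey -leq_n_skey /f; congr (n <= skey (s (_, _))).
  by apply: val_inj; rewrite val_insubd n_gt0.
have fpos j : s (j, false) = (j, false).
  apply: skey_inj; rewrite -[j in LHS](valKd (Ordinal n_gt0)) -/(f j).
  by rewrite (incr_squeeze fS f0 (skey_lt _) (ltn_ord j)).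
apply/permP => -[j []]; last by rewrite fpos perm1.
by rewrite -[(j, true)]/(negs (j, false)) sN fpos perm1.
Qed.

Lemma compA : associative (@Defs.comp n).
Proof. by move=> s t u; rewrite /Defs.comp mulgA. Qed.

Lemma word_prod_cat (u v : seq 'I_n) :
  word_prod (u ++ v) = Defs.comp (word_prod u) (word_prod v).
Proof.
elim: u => [|j u IH] /=; first by rewrite /Defs.comp mulg1.
by rewrite IH compA.
Qed.

Lemma inB_word (w : seq 'I_n) : inB (word_prod w).
Proof. by elim: w => [|j w IH]; [exact: inB1 | exact: inB_comp (inB_gen j) IH]. Qed.

Lemma dlen_comp_word s (w : seq 'I_n) : inB s ->
  dlen (Defs.comp s (word_prod w)) <= dlen s + 2 * size w.
Proof.
elim: w s => [|j w IH] s sB /=; first by rewrite /Defs.comp mul1g addn0.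
rewrite compA; have := IH _ (inB_comp sB (inB_gen j)); have := dlen_comp_gen j sB.
by case: descent => /=; lia.
Qed.

Lemma dlen_word (w : seq 'I_n) : dlen (word_prod w) <= 2 * size w.
Proof. by have := dlen_comp_word w inB1; rewrite /Defs.comp mulg1 dlen1. Qed.

Lemma reduced_word s : inB s -> exists2 w, word_prod w = s & 2 * size w = dlen s.
Proof.
move=> sB; have [k] := ubnP (dlen s); elim: k s sB => [|k IH] s sB ltsk.
  by rewrite ltn0 in ltsk.
have [i desc | no_desc] := pickP (descent s); last first.
  have -> : s = 1%g by apply: no_descent_eq1 => // i; rewrite no_desc.
  by exists [::]; rewrite ?dlen1.
have := dlen_comp_gen i sB; rewrite desc /= => e.
have [|w ws lw] := IH (Defs.comp s (gen i)) (inB_comp sB (inB_gen i)); first lia.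
exists (rcons w i).
  by rewrite -cats1 word_prod_cat ws /= /Defs.comp mul1g mulgA gen2 mul1g.
by rewrite size_rcons; lia.
Qed.

Lemma size_reduced_word (w : seq 'I_n) :
  2 * size w = dlen (word_prod w) -> size w < #|{perm signed n}|.
Proof.
(* Prefixes of a reduced word are reduced, so their products are distinct. *)
move=> lw; have prefix k : k <= size w -> dlen (word_prod (take k w)) = 2 * k.
  move=> le_kw; apply/eqP; rewrite eqn_leq.
  have := dlen_word (take k w); rewrite size_takel // => -> /=.
  have := dlen_comp_word (drop k w) (inB_word (take k w)).
  by rewrite -word_prod_cat cat_take_drop -lw size_drop; lia.
have inj : injective (fun k : 'I_(size w).+1 => word_prod (take k w)).
  move=> k1 k2 /(congr1 dlen); rewrite !prefix ?leq_ord // => e.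
  by apply: ord_inj; lia.
by have := leq_card _ inj; rewrite card_ord.
Qed.

Lemma lenB_dlen s : inB s -> 2 * lenB s = dlen s.
Proof.
move=> sB; have [w ws lw] := reduced_word sB.
have ltw : size w < #|{perm signed n}| by apply: size_reduced_word; rewrite ws.
suff -> : lenB s = size w by [].
rewrite /lenB (bigmin_ord_eq (ltnW ltw)) => [//||k /existsP [t /eqP ts]].
  apply/existsP; have sz : size w == (inord (size w) : 'I_#|{perm signed n}|.+1).
    by rewrite inordK ?ltnS ?(ltnW ltw).
  by exists (Tuple sz); rewrite /= ws.
by have := dlen_word t; rewrite ts -lw size_tuple; lia.
Qed.

Lemma DesS_descent s i : inB s -> (i \in DesS s) = (0 < i) && descent s i.
Proof.
move=> sB; rewrite inE; case: (posnP i) => //= _.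
have := dlen_comp_gen i sB.
rewrite -(lenB_dlen sB) -(lenB_dlen (inB_comp sB (inB_gen i))).
by case: descent => /=; lia.
Qed.

Definition window s : {set signed n} := [set s (i, false) | i : 'I_n].

Definition phi_fun s x : signed n :=
  let y := rflip skey (window s) (s (rev_ord x.1, false)) in
  if x.2 then negs y else y.

(* The fallback [s] of [insubd] is never used for [s] in B_n, see [phiBE]. *)
Definition phiB s : {perm signed n} := insubd s [ffun x => phi_fun s x].

Lemma card_window s : #|window s| = n.
Proof. by rewrite card_imset ?card_ord // => i j /perm_inj []. Qed.

Lemma mem_window s i : s (i, false) \in window s.
Proof. exact: imset_f. Qed.

Lemma negs_window s y : inB s -> y \in window s -> negs y \notin window s.
Proof.
move=> /inBP sN /imsetP [i _ ->]; apply/negP => /imsetP [j _].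
by rewrite -sN => /perm_inj [].
Qed.

Lemma phi_fun_inj s : inB s -> injective (phi_fun s).
Proof.
move=> sB [i b] [j c]; rewrite /phi_fun /=.
set V := window s; have Vi := mem_window s (rev_ord i); have Vj := mem_window s (rev_ord j).
have fVi := rflip_in skey_inj Vi; have fVj := rflip_in skey_inj Vj.
have same : rflip skey V (s (rev_ord i, false)) = rflip skey V (s (rev_ord j, false)) -> i = j.
  move=> e; have := rflipK skey_inj Vi.
  rewrite e (rflipK skey_inj Vj) => /perm_inj [eji].
  by apply: ord_inj; have := ltn_ord i; have := ltn_ord j; lia.
case: b c => [] [] e.
- by rewrite (same (negs_inj e)).
- by have := negs_window sB fVj; rewrite -e negsK fVi.
- by have := negs_window sB fVi; rewrite e negsK fVj.
- by rewrite (same e).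
Qed.

Lemma phiBE s : inB s -> phiB s =1 phi_fun s.
Proof.
move=> sB x; have inj : injectiveb [ffun x => phi_fun s x].
  by apply/injectiveP => a b; rewrite !ffunE; apply: phi_fun_inj.
by rewrite -pvalE /phiB val_insubd inj ffunE.
Qed.

Lemma phiB_pos s i : inB s ->
  phiB s (i, false) = rflip skey (window s) (s (rev_ord i, false)).
Proof. by move=> sB; rewrite phiBE. Qed.

Lemma inB_phiB s : inB s -> inB (phiB s).
Proof. by move=> sB; apply/inBP => -[i []]; rewrite !phiBE // /phi_fun /= ?negsK. Qed.

Lemma window_phiB s : inB s -> window (phiB s) = window s.
Proof.
move=> sB; apply/eqP; rewrite eqEcard !card_window leqnn andbT.
apply/subsetP => _ /imsetP [i _ ->]; rewrite phiB_pos //.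
exact: (rflip_in skey_inj (mem_window _ _)).
Qed.

Lemma phiBK s : inB s -> phiB (phiB s) = s.
Proof.
move=> sB; have pB := inB_phiB sB.
have pos i : phiB (phiB s) (i, false) = s (i, false).
  by rewrite !phiB_pos // window_phiB // rev_ordK (rflipK skey_inj) ?mem_window.
apply/permP => -[i []]; last exact: pos.
by rewrite -[(i, true)]/(negs (i, false)) (inBP _ (inB_phiB pB)) (inBP _ sB) pos.
Qed.

Lemma NegB_inv s : inB s -> NegB s^-1 = [set i | (i, true) \in window s].
Proof.
move=> /inBP sN; apply/setP => i; rewrite !inE; apply/idP/imsetP.
  case e: (s^-1 (i, false))%g => [j []] // _; exists j => //.
  by rewrite -[s _]negsK -sN -[negs (j, false)]/(j, true) -e permKV.
by move=> [j _ e]; rewrite -[(i, false)]/(negs (i, true)) e -sN permK.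
Qed.

End SignedLetters.

(* In ['I_n.+1], [- j] is [n.+1 - j] for [j != 0]: the reflection [i |-> n - i]
   of the paper's indices. *)
Lemma DesS_phiB n (s : {perm signed n.+1}) (j : 'I_n.+1) : inB s ->
  ((- j)%R \in DesS (phiB s)) = (j \in DesS s).
Proof.
move=> sB; rewrite !DesS_descent ?inB_phiB //.
have [j0|j_gt0] := posnP j.
  have -> : j = 0%R by apply: ord_inj.
  by rewrite oppr0.
have vj : (n.+1 - j) %% n.+1 = n.+1 - j by rewrite modn_small //; lia.
have nj_gt0 : 0 < (- j)%R by rewrite /= vj subn_gt0.
rewrite nj_gt0 /descent !prev_pos // !phiB_pos // (ltn_rflip (@skey_inj _)) ?mem_window //.
by congr (skey (s (_, _)) < skey (s (_, _))); apply: ord_inj; rewrite /= vj;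
  have := ltn_ord j; lia.
Qed.

Lemma majB_phiB n (s : {perm signed n.+1}) : inB s -> majB s = rmajB (phiB s).
Proof.
move=> sB; rewrite /rmajB (reindex_inj (inv_inj (@opprK _))).
apply: eq_big => [j | j]; first by rewrite /= DesS_phiB.
rewrite DesS_descent // => /andP [j_gt0 _] /=.
by rewrite modn_small; have := ltn_ord j; lia.
Qed.

Theorem lemma2p29 (n : nat) : 1 <= n ->
  exists phi : {perm signed n} -> {perm signed n},
    (forall s, inB s -> inB (phi s)) /\
    (forall s, inB s -> phi (phi s) = s) /\
    (forall s, inB s ->
       majB s = rmajB (phi s) /\ NegB (s^-1)%g = NegB ((phi s)^-1)%g).
Proof.
case: n => [//|n] _; exists (@phiB n.+1); split; first exact: inB_phiB.
split; first exact: phiBK.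
move=> s sB; split; first exact: majB_phiB.
by rewrite !NegB_inv ?inB_phiB // window_phiB.
Qed.
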